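(* Let $A=(a_1,\dots,a_n,a_\bot)$ with $1\le n\le m$ and $a_1,\dots,a_n$ distinct regular items, let $w:A^{\mathrm{ground}}\to\mathbb{R}$ satisfy $w(a_1)\ge\dots\ge w(a_n)\ge w(a_\bot)$, and let $\bar u,u:A^{\mathrm{ground}}\to[0,1]$ with $\bar u(a_\bot)=u(a_\bot)=1$ satisfy $\bar u(a)\ge u(a)$ for all $a$ in $A$. Then $f(A,\bar u,w)\ge f(A,u,w)$.
   Context: $A^{\mathrm{ground}}=\{a_1,\dots,a_N,a_\bot\}$ with regular items and a virtual item $a_\bot$; $1\le m\le N$. For a sequence $A$ of distinct elements of $A^{\mathrm{ground}}$ and functions $u,w$, $f(A,u,w)=\sum_{i=1}^{|A|}\prod_{j=1}^{i-1}(1-u(A(j)))\,u(A(i))\,w(A(i))$. *)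

From mathcomp Require Import all_boot all_order all_algebra.
Set Implicit Arguments. Unset Strict Implicit. Unset Printing Implicit Defensive.
Import Order.TTheory GRing.Theory Num.Theory.
Local Open Scope ring_scope.

(* Ground set A^ground = {a_1,...,a_N, a_bot}: regular items are [Some i]
   for i : 'I_N, the virtual item a_bot is [None]. *)
Definition ground (N : nat) := option 'I_N.
Definition a_bot {N : nat} : ground N := None.

Definition f {R : ringType} {N : nat} (A : seq (ground N))
    (u w : ground N -> R) : R :=
  \sum_(i < size A)
    (\prod_(j < i) (1 - u (nth a_bot A j))) * u (nth a_bot A i) * w (nth a_bot A i).

From mathcomp Require Import all_boot all_order all_algebra.
From mathcomp Require Import ring lra.
Import Order.TTheory GRing.Theory Num.Theory.
Local Open Scope ring_scope.

(* f(A, u, w) is the expected reward of scanning A in order, stopping at item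
   a with probability u a and collecting w a.  Since the last item a_bot is
   taken surely, the value f(l) of a suffix is a convex combination of its
   weights, hence at most the weight of any item placed before it.  Raising u
   at a thus trades the continuation value f(l) for w(a) >= f(l), and raising
   u inside l raises f(l) by induction. *)

Lemma f_nil {R : nzRingType} {N : nat} (u w : ground N -> R) : f [::] u w = 0.
Proof. by rewrite /f big_ord0. Qed.

Lemma f_cons {R : nzRingType} {N : nat} (a : ground N) (l : seq (ground N))
    (u w : ground N -> R) :
  f (a :: l) u w = u a * w a + (1 - u a) * f l u w.
Proof.
rewrite /f /= big_ord_recl /= big_ord0 mul1r big_distrr /=.
by congr (_ + _); apply: eq_bigr => i _; rewrite big_ord_recl !mulrA.
Qed.

Section Monotonicity.
Variables (R : realDomainType) (N : nat).
Implicit Types (u ub w : ground N -> R) (l t : seq (ground N)).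

Lemma f_le_mul_stopping u w l c :
  (forall x, 0 <= u x <= 1) -> {in l, forall x, w x <= c} ->
  f l u w <= c * (1 - \prod_(x <- l) (1 - u x)).
Proof.
move=> u01; elim: l => [|a l IHl] w_le; first by rewrite f_nil big_nil subrr mulr0.
have /andP[ua_ge0 ua_le1] := u01 a.
have wa_le := w_le a (mem_head a l).
have IH := IHl (fun x xl => w_le x (mem_behead (s := a :: l) xl)).
rewrite f_cons big_cons.
have : u a * w a <= u a * c by apply: ler_wpM2l.
have : (1 - u a) * f l u w <= (1 - u a) * (c * (1 - \prod_(x <- l) (1 - u x))).
  by apply: ler_wpM2l; rewrite ?subr_ge0.
lra.
Qed.

Lemma f_rcons_le u w t b c :
  (forall x, 0 <= u x <= 1) -> u b = 1 -> {in rcons t b, forall x, w x <= c} ->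
  f (rcons t b) u w <= c.
Proof.
move=> u01 ub1 w_le; have := f_le_mul_stopping _ _ _ _ u01 w_le.
by rewrite big_rcons /= ub1 subrr mulr0 subr0 mulr1.
Qed.

Lemma f_cons_le_monotone u ub w a l :
  0 <= u a -> u a <= ub a -> u a <= 1 ->
  f l ub w <= w a -> f l u w <= f l ub w ->
  f (a :: l) u w <= f (a :: l) ub w.
Proof.
move=> ua_ge0 ua_le ua_le1 fl_le_wa fl_le.
have gain_a : 0 <= (ub a - u a) * (w a - f l ub w) by apply: mulr_ge0; lra.
have gain_l : 0 <= (1 - u a) * (f l ub w - f l u w) by apply: mulr_ge0; lra.
rewrite !f_cons.
have -> : ub a * w a + (1 - ub a) * f l ub w = u a * w a + (1 - u a) * f l u w
    + ((ub a - u a) * (w a - f l ub w) + (1 - u a) * (f l ub w - f l u w)).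
  by ring.
lra.
Qed.

Lemma f_rcons_monotone u ub w t b :
  (forall x, 0 <= u x <= 1) -> (forall x, 0 <= ub x <= 1) ->
  u b = 1 -> ub b = 1 ->
  sorted (fun x y => y <= x) (map w (rcons t b)) ->
  {in rcons t b, forall x, u x <= ub x} ->
  f (rcons t b) u w <= f (rcons t b) ub w.
Proof.
move=> u01 ub01 ub1 ubb1; elim: t => [|a t IHt] /= w_sorted u_le.
  by rewrite !f_cons !f_nil ub1 ubb1.
have w_le_wa : {in rcons t b, forall x, w x <= w a}.
  move=> x xt; have /allP := order_path_min (fun x y z h1 h2 => le_trans h2 h1) w_sorted.
  by apply; exact: map_f.
have /andP[ua_ge0 ua_le1] := u01 a.
apply: f_cons_le_monotone => //; first exact: u_le (mem_head _ _).
- exact: f_rcons_le.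
- exact: IHt (path_sorted w_sorted) (fun x xt => u_le x (mem_behead (s := a :: rcons t b) xt)).
Qed.

End Monotonicity.

Theorem lemma14 (R : realFieldType) (N m : nat) (s : seq 'I_N)
    (w ubar u : ground N -> R) :
  (1 <= m)%N -> (m <= N)%N ->
  (1 <= size s)%N -> (size s <= m)%N -> uniq s ->
  let A := rcons (map Some s) a_bot in
  sorted (fun x y => y <= x) (map w A) ->
  (forall a, 0 <= u a <= 1) -> (forall a, 0 <= ubar a <= 1) ->
  ubar a_bot = 1 -> u a_bot = 1 ->
  (forall a, a \in A -> u a <= ubar a) ->
  f A u w <= f A ubar w.
Proof.
move=> _ _ _ _ _ A w_sorted u01 ubar01 ubar_bot u_bot u_le.
exact: f_rcons_monotone.
Qed.
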